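(* Let $q=2^m>4$ and let $l$ be an integer with $0\leq l\leq 3$. Then there exists a linear $l$-intersection pair of two MDS codes over $\mathbb{F}_q$ with parameters $[q+2,3,q]_q$ and $[q+2,q-1,4]_q$.
   Context: An $[n,k,d]_q$ linear code is a $k$-dimensional subspace of $\mathbb{F}_q^n$ with minimum Hamming distance $d$; it is MDS if $d=n-k+1$. Two linear codes $C_1,C_2\subseteq\mathbb{F}_q^n$ form a linear $l$-intersection pair if $\dim(C_1\cap C_2)=l$. *)

From HB Require Import structures.
From mathcomp Require Import all_boot all_order all_algebra all_field.
Set Implicit Arguments. Unset Strict Implicit. Unset Printing Implicit Defensive.
Import GRing.Theory.
Local Open Scope ring_scope.

Definition hamming_dist (F : fieldType) (n : nat) (u v : 'rV[F]_n) : nat :=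
  #|[set i : 'I_n | u 0 i != v 0 i]|.

Definition min_dist_eq (F : fieldType) (n : nat) (C : {vspace 'rV[F]_n}) (d : nat) : Prop :=
  (exists u v, [/\ u \in C, v \in C, u != v & hamming_dist u v = d]) /\
  (forall u v, u \in C -> v \in C -> u != v -> (d <= hamming_dist u v)%N).

Definition is_nkd_code (F : fieldType) (n : nat) (C : {vspace 'rV[F]_n}) (k d : nat) : Prop :=
  \dim C = k /\ min_dist_eq C d.

Definition is_MDS (F : fieldType) (n : nat) (C : {vspace 'rV[F]_n}) : Prop :=
  exists d, min_dist_eq C d /\ d = (n - \dim C + 1)%N.

Definition l_intersection_pair (F : fieldType) (n : nat) (C1 C2 : {vspace 'rV[F]_n}) (l : nat) : Prop :=
  \dim (C1 :&: C2)%VS = l.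

(* Let q = #|F| be even and take for the columns of a 3 x (q + 2) matrix G the
   points of the hyperoval {(1, t, t^2) | t in F} + {(0, 1, 0), (0, 0, 1)}: a
   line meets it in at most two points, so any three columns of G are
   independent and G generates a [q + 2, 3, q] MDS code C1.  The code C2 with
   parity-check matrix H is a [q + 2, q - 1, 4] MDS code as soon as any three
   columns of H are independent, which holds when the columns of H are nonzero
   multiples of the columns of G, permuted by t |-> t^-1.  Since G has full row
   rank, dim (C1 :&: C2) = dim {a | a G H^T = 0}; with this permutation the
   entries of G H^T are power sums \sum_t t^(r - r'), so G H^T is diagonal
   with entries (weight - 1), and the weights control the number l of zero
   diagonal entries. *)

From HB Require Import structures.
From mathcomp Require Import all_boot all_order all_algebra all_field.
From mathcomp Require Import fingroup cyclic ring zify.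
Set Implicit Arguments. Unset Strict Implicit. Unset Printing Implicit Defensive.
Import GRing.Theory.
Local Open Scope ring_scope.

Lemma widen_ord_inj n m (le_nm : (n <= m)%N) : injective (widen_ord le_nm).
Proof. by move=> i j /(congr1 val) ij; apply: val_inj. Qed.
Arguments widen_ord_inj {n m} le_nm.

Lemma card_ord_lt n l : (l <= n)%N -> #|[set j : 'I_n | (j < l)%N]| = l.
Proof.
move=> le_ln; rewrite -[in RHS](card_ord l) -cardsT.
rewrite -(card_imset _ (widen_ord_inj le_ln)).
apply: eq_card => j; rewrite inE; apply/idP/imsetP => [lt_jl|[i _ ->]].
  by exists (Ordinal lt_jl); rewrite ?in_setT //; apply: val_inj.
exact: (ltn_ord i).
Qed.

Lemma exists_inj_in (T : finType) (A : {pred T}) k : (k <= #|A|)%N ->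
  exists2 f : 'I_k -> T, injective f & forall i, f i \in A.
Proof.
case/card_geqP=> s [s_uniq /eqP s_size sA].
exists (tnth (Tuple s_size)); first exact/tuple_uniqP.
by move=> i; apply/sA/mem_tnth.
Qed.

Lemma exists_inj_cover (T : finType) (A : {set T}) k : (#|A| <= k <= #|T|)%N ->
  exists2 f : 'I_k -> T, injective f & forall x, x \in A -> exists i, f i = x.
Proof.
case/andP=> le_Ak le_kT.
have : (k - #|A| <= #|~: A|)%N by rewrite [#|~: A|]cardsCs setCK; lia.
case/card_geqP=> s [s_uniq s_size sAC].
have t_size : size (enum A ++ s) == k by rewrite size_cat -cardE s_size subnKC.
exists (tnth (Tuple t_size)).
  apply/tuple_uniqP; rewrite /= cat_uniq enum_uniq s_uniq andbT /=.
  by apply/hasPn => x /sAC; rewrite mem_enum inE.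
move=> x xA; have : x \in Tuple t_size by rewrite mem_cat mem_enum xA.
by case/tnthP=> i ->; exists i.
Qed.

Lemma card_sum_set (A B : finType) (Z : {set A + B}) :
  (#|Z| <= #|[set a | inl a \in Z]| + #|[set b | inr b \in Z]|)%N.
Proof.
have sub : Z \subset inl @: [set a | inl a \in Z] :|: inr @: [set b | inr b \in Z].
  by apply/subsetP => -[a|b] xZ; rewrite inE; apply/orP; [left|right];
    apply/imsetP; [exists a | exists b]; rewrite ?inE.
apply: leq_trans (subset_leq_card sub) _; apply: leq_trans (leq_card_setU _ _) _.
by rewrite !card_imset //; [move=> ? ? [] | move=> ? ? []].
Qed.

Lemma card_bool_set (P : pred bool) : #|[set b | P b]| = (P true + P false)%N.
Proof.
rewrite -sum1_card big_mkcond big_bool !inE.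
by case: (P true); case: (P false).
Qed.

Section LinearCodes.
Variable F : fieldType.

Definition wt n (u : 'rV[F]_n) := #|[set i | u 0 i != 0]|.

Definition zeros n (u : 'rV[F]_n) := [set i | u 0 i == 0].

Lemma in_zeros n (u : 'rV[F]_n) i : (i \in zeros u) = (u 0 i == 0).
Proof. by rewrite inE. Qed.

Lemma wt_zeros n (u : 'rV[F]_n) : wt u = (n - #|zeros u|)%N.
Proof.
have := cardsC (zeros u); rewrite card_ord => E; rewrite -[X in (X - _)%N]E addKn.
by apply: eq_card => i; rewrite !inE.
Qed.

Lemma hamming_distE n (u v : 'rV[F]_n) : hamming_dist u v = wt (u - v).
Proof. by apply: eq_card => i; rewrite !inE !mxE subr_eq0. Qed.

Lemma min_dist_eq_wt n (C : {vspace 'rV[F]_n}) d :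
  (exists u, [/\ u \in C, u != 0 & wt u = d]) ->
  (forall u, u \in C -> u != 0 -> (d <= wt u)%N) -> min_dist_eq C d.
Proof.
move=> [u [uC u0 wt_u]] wt_ge; split.
  by exists u, 0; rewrite hamming_distE subr0 mem0v.
move=> v v' vC v'C vv'; rewrite hamming_distE wt_ge ?memvB //.
by rewrite subr_eq0.
Qed.

Definition mxlfun m n (A : 'M[F]_(m, n)) : 'Hom('rV[F]_m, 'rV[F]_n) :=
  linfun (mulmxr A).

Lemma mxlfunE m n (A : 'M[F]_(m, n)) u : mxlfun A u = u *m A.
Proof. by rewrite lfunE. Qed.

Lemma dimv_rV n : \dim (fullv : {vspace 'rV[F]_n}) = n.
Proof. by rewrite dimvf /dim /= mul1n. Qed.

Lemma exists_nonzero_lker m n (A : 'M[F]_(m, n)) :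
  (n < m)%N -> exists2 a : 'rV_m, a != 0 & a *m A = 0.
Proof.
move=> lt_nm; have : kermx A != 0.
  by rewrite kermx_eq0 /row_free neq_ltn (leq_ltn_trans (rank_leq_col A)).
by case/rowV0Pn => a /sub_kermxP aA a0; exists a.
Qed.

Definition arc_mx k N (G : 'M[F]_(k, N)) :=
  forall f : 'I_k -> 'I_N, injective f -> colsub f G \in unitmx.

Lemma arc_mx_scale_perm k N (G : 'M[F]_(k, N)) (c : 'I_N -> F) (s : 'I_N -> 'I_N) :
  arc_mx G -> (forall i, c i != 0) -> injective s ->
  arc_mx (\matrix_(r, i) (c i * G r (s i))).
Proof.
move=> arcG c0 s_inj f f_inj.
have -> : colsub f (\matrix_(r, i) (c i * G r (s i))) =
          colsub (s \o f) G *m diag_mx (\row_i c (f i)).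
  by apply/matrixP => r i; rewrite mul_mx_diag !mxE mulrC.
rewrite unitmx_mul arcG /=; last exact: inj_comp.
by rewrite unitmxE det_diag unitfE; apply/prodf_neq0 => i _; rewrite mxE.
Qed.

Definition gen_code k N (G : 'M[F]_(k, N)) := limg (mxlfun G).

Section GeneratorMatrix.
Variables (k N : nat) (G : 'M[F]_(k, N)).
Hypotheses (arcG : arc_mx G) (le_kN : (k <= N)%N).

Lemma arc_mx_zeros a : a != 0 -> (#|zeros (a *m G)| < k)%N.
Proof.
move=> a0; rewrite ltnNge; apply: contra a0 => /exists_inj_in[f f_inj f_zero].
have : a *m colsub f G = 0.
  by apply/rowP => i; have := f_zero i; rewrite mulmx_colsub in_zeros !mxE => /eqP.
have free_fG : row_free (colsub f G) by rewrite row_free_unit arcG.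
by move=> aG0; apply/eqP/(row_free_inj free_fG); rewrite aG0 mul0mx.
Qed.

Lemma arc_mx_wt (a : 'rV_k) : a != 0 -> (N - k < wt (a *m G))%N.
Proof. by move=> a0; have := arc_mx_zeros a0; rewrite wt_zeros; lia. Qed.

Lemma lker_arc_mx : lker (mxlfun G) = 0%VS.
Proof.
apply/eqP; rewrite -subv0; apply/subvP => a; rewrite memv_ker mxlfunE memv0.
move/eqP => aG0; apply: contraTT le_kN => /arc_mx_zeros; rewrite -ltnNge.
have zerosT : zeros (a *m G) = setT.
  by apply/setP => i; rewrite aG0 in_zeros in_setT mxE eqxx.
by rewrite zerosT cardsT card_ord.
Qed.

Lemma dim_gen_code : \dim (gen_code G) = k.
Proof.
have := limg_ker_dim (mxlfun G) fullv.
by rewrite lker_arc_mx capv0 dimv0 dimv_rV.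
Qed.

Lemma gen_code_min_dist : (0 < k)%N -> min_dist_eq (gen_code G) (N - k + 1).
Proof.
move=> k_gt0; apply: min_dist_eq_wt => [|_ /memv_imgP[a _ ->] aG0]; last first.
  rewrite mxlfunE in aG0 *; rewrite addn1 arc_mx_wt //.
  by apply: contraNneq aG0 => ->; rewrite mul0mx.
have le_k1N : (k.-1 <= N)%N by lia.
have [a a0 aG0] : exists2 a : 'rV_k, a != 0 & a *m colsub (widen_ord le_k1N) G = 0.
  by apply: exists_nonzero_lker; rewrite ltn_predL.
exists (a *m G); split.
- by rewrite -mxlfunE memv_img ?memvf.
- apply: contraNneq a0 => aG_0.
  by rewrite -memv0 -lker_arc_mx memv_ker mxlfunE aG_0.
have : (k.-1 <= #|zeros (a *m G)|)%N.
  rewrite -(card_ord k.-1) -cardsT -(card_imset _ (widen_ord_inj le_k1N)).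
  apply/subset_leq_card/subsetP => _ /imsetP[i _ ->].
  by rewrite in_zeros; move/rowP: aG0 => /(_ i); rewrite mulmx_colsub !mxE => ->.
by have := arc_mx_wt a0; rewrite wt_zeros; lia.
Qed.

Lemma gen_code_mds :
  (0 < k)%N -> is_nkd_code (gen_code G) k (N - k + 1) /\ is_MDS (gen_code G).
Proof.
move=> k_gt0; have dist := gen_code_min_dist k_gt0.
by split; [split | exists (N - k + 1)%N]; rewrite ?dim_gen_code.
Qed.

End GeneratorMatrix.

(* For injective f, the word carrying z at the positions f i and 0 elsewhere. *)
Definition spread m N (f : 'I_m -> 'I_N) (z : 'rV[F]_m) : 'rV[F]_N :=
  z *m rowsub f 1%:M.

Lemma mul_spread m N p (f : 'I_m -> 'I_N) z (A : 'M[F]_(N, p)) :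
  spread f z *m A = z *m rowsub f A.
Proof. by rewrite -mulmxA -rowsubE. Qed.

Lemma spread_supp m N (f : 'I_m -> 'I_N) z j : spread f z 0 j != 0 -> j \in codom f.
Proof.
apply: contraNT => jf; rewrite mxE big1 // => i _; rewrite !mxE.
by case: eqP => [fij|]; [rewrite -fij codom_f in jf | rewrite mulr0].
Qed.

Section Spread.
Variables (m N : nat) (f : 'I_m -> 'I_N).
Hypothesis f_inj : injective f.

Lemma colsub_spread z : colsub f (spread f z) = z.
Proof.
rewrite -mulmx_colsub -mxsubcr [mxsub _ _ _](_ : _ = 1%:M) ?mulmx1 //.
by apply/matrixP => i j; rewrite !mxE (inj_eq f_inj).
Qed.

Lemma spread_colsub (x : 'rV[F]_N) :
  (forall j, x 0 j != 0 -> j \in codom f) -> spread f (colsub f x) = x.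
Proof.
move=> x_supp; apply/rowP => j; have [/codomP[i ->]|jf] := boolP (j \in codom f).
  by have /rowP/(_ i) := colsub_spread (colsub f x); rewrite [LHS]mxE [RHS]mxE.
have -> : x 0 j = 0 by apply/eqP; apply: contraNT jf; apply: x_supp.
by apply/eqP; apply: contraNT jf; apply: spread_supp.
Qed.

End Spread.

Definition check_code k N (P : 'M[F]_(k, N)) := lker (mxlfun P^T).

Section ParityCheckMatrix.
Variables (k N : nat) (P : 'M[F]_(k, N)).
Hypotheses (arcP : arc_mx P) (lt_kN : (k < N)%N).

Let rowsub_unit f : injective f -> rowsub f P^T \in unitmx.
Proof. by move=> f_inj; rewrite -unitmx_tr trmx_mxsub trmxK arcP. Qed.

Lemma dim_check_code : \dim (check_code P) = (N - k)%N.
Proof.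
have le_kN := ltnW lt_kN; set f := widen_ord le_kN.
have surj : limg (mxlfun P^T) = fullv.
  apply/eqP; rewrite eqEsubv subvf; apply/subvP => y _; apply/memv_imgP.
  exists (spread f (y *m invmx (rowsub f P^T))); first exact: memvf.
  have f_unit := rowsub_unit (widen_ord_inj le_kN).
  by rewrite mxlfunE mul_spread mulmxKV.
have := limg_ker_dim (mxlfun P^T) fullv.
by rewrite capfv surj !dimv_rV => E; rewrite -[X in (X - _)%N]E addnK.
Qed.

Lemma check_code_wt x : x \in check_code P -> x != 0 -> (k < wt x)%N.
Proof.
rewrite memv_ker mxlfunE => /eqP xP x0; rewrite ltnNge; apply: contra x0 => wt_x.
have [f f_inj f_cover] : exists2 f : 'I_k -> 'I_N, injective f &
    forall j, j \in [set j | x 0 j != 0] -> exists i, f i = j.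
  by apply: exists_inj_cover; rewrite wt_x card_ord ltnW.
have x_supp j : x 0 j != 0 -> j \in codom f.
  by move=> xj; have [|i <-] := f_cover j; rewrite ?inE ?codom_f.
have : colsub f x *m rowsub f P^T = 0 *m rowsub f P^T.
  by rewrite mul0mx -mul_spread spread_colsub.
have f_free : row_free (rowsub f P^T) by rewrite row_free_unit rowsub_unit.
by move/(row_free_inj f_free) => xf0; rewrite -(spread_colsub f_inj x_supp) xf0 /spread mul0mx.
Qed.

Lemma check_code_min_dist : min_dist_eq (check_code P) k.+1.
Proof.
apply: min_dist_eq_wt check_code_wt.
pose f := widen_ord lt_kN; have f_inj : injective f := widen_ord_inj lt_kN.
have [z z0 zP] : exists2 z : 'rV_k.+1, z != 0 & z *m rowsub f P^T = 0.
  exact: exists_nonzero_lker.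
have xP : spread f z \in check_code P by rewrite memv_ker mxlfunE mul_spread zP.
have x0 : spread f z != 0.
  apply: contraNneq z0 => x0; rewrite -(colsub_spread f_inj z) x0.
  by apply/eqP/rowP => i; rewrite !mxE.
exists (spread f z); split => //.
apply/eqP; rewrite eqn_leq check_code_wt // andbT.
apply: (@leq_trans #|codom f|); last by rewrite card_codom // card_ord.
by apply/subset_leq_card/subsetP => j; rewrite inE => /spread_supp.
Qed.

Lemma check_code_mds :
  is_nkd_code (check_code P) (N - k) k.+1 /\ is_MDS (check_code P).
Proof.
split; first by split; [exact: dim_check_code | exact: check_code_min_dist].
by exists k.+1; split; [exact: check_code_min_dist | rewrite dim_check_code; lia].
Qed.

End ParityCheckMatrix.

Lemma dim_limg_cap_lker m n p (A : 'M[F]_(m, n)) (B : 'M[F]_(n, p)) :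
    lker (mxlfun A) = 0%VS ->
  \dim (limg (mxlfun A) :&: lker (mxlfun B)) = \dim (lker (mxlfun (A *m B))).
Proof.
move=> kerA0; have AB : (mxlfun B \o mxlfun A)%VF = mxlfun (A *m B).
  by apply/lfunP => u; rewrite comp_lfunE !mxlfunE mulmxA.
have := limg_ker_dim (mxlfun B) (limg (mxlfun A)); rewrite -limg_comp AB.
have := limg_ker_dim (mxlfun A) fullv; rewrite kerA0 capv0 dimv0 add0n => ->.
have := limg_ker_dim (mxlfun (A *m B)) fullv; rewrite capfv; lia.
Qed.

Lemma mem_span_delta n (J : {set 'I_n}) (u : 'rV[F]_n) :
  (forall j, u 0 j != 0 -> j \in J) -> u \in span [seq delta_mx 0 j | j in J].
Proof.
move=> u_supp; rewrite [u]row_sum_delta (bigID (mem J)) /= [X in _ + X]big1 ?addr0.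
  by apply: memv_suml => j jJ; rewrite memvZ // memv_span // image_f.
move=> j jNJ; suff -> : u 0 j = 0 by rewrite scale0r.
by apply/eqP; apply: contraNT jNJ; apply: u_supp.
Qed.

Lemma dim_lker_diag n (d : 'rV[F]_n) :
  \dim (lker (mxlfun (diag_mx d))) = #|[set j | d 0 j == 0]|.
Proof.
set Z := [set j | d 0 j == 0].
have dim_span_delta (J : {set 'I_n}) :
    (\dim (span [seq (delta_mx 0%R j : 'rV[F]_n) | j in J]) <= #|J|)%N.
  by apply: leq_trans (dim_span _) _; rewrite size_image.
have ker_le : (\dim (lker (mxlfun (diag_mx d))) <= #|Z|)%N.
  apply: leq_trans _ (dim_span_delta Z); apply/dimvS/subvP => u.
  rewrite memv_ker mxlfunE => /eqP/rowP ud; apply: mem_span_delta => j uj.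
  by move: (ud j); rewrite mul_mx_diag !mxE inE => /eqP; rewrite mulf_eq0 (negbTE uj).
have img_le : (\dim (limg (mxlfun (diag_mx d))) <= #|~: Z|)%N.
  apply: leq_trans _ (dim_span_delta (~: Z)); apply/dimvS/subvP => _ /memv_imgP[u _ ->].
  apply: mem_span_delta => j; rewrite mxlfunE mul_mx_diag !mxE !inE.
  by rewrite mulf_eq0 negb_or => /andP[].
have := limg_ker_dim (mxlfun (diag_mx d)) fullv; rewrite capfv dimv_rV.
have := cardsC Z; rewrite card_ord; lia.
Qed.

End LinearCodes.

Section FiniteFields.
Variable F : finFieldType.

Lemma natr_card : #|F|%:R = 0 :> F.
Proof. by rewrite -FinRing.zmodXgE -cardsT expg_cardG ?inE. Qed.

Lemma exists_expr_neq1 k : (0 < k < #|F|.-1)%N -> exists2 w : F, w != 0 & w ^+ k != 1.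
Proof.
case/andP=> k_gt0 lt_kq.
have [w /andP[w0 wk1] | all_roots] := pickP (fun w : F => (w != 0) && (w ^+ k != 1)).
  by exists w.
have : 'X^k - 1%:P = 0 :> {poly F}.
  apply: (@roots_geq_poly_eq0 _ _ (enum (predC1 (0 : F)))); last 2 first.
  - exact: enum_uniq.
  - by rewrite size_XnsubC // -cardE cardC1.
  apply/allP => w; rewrite mem_enum inE => w0; move: (all_roots w).
  by rewrite /= w0 rootE !hornerE subr_eq0 => /negbFE.
by move/eqP; rewrite -size_poly_eq0 size_XnsubC.
Qed.

Lemma sum_expr k : (0 < k < #|F|.-1)%N -> \sum_(t : F) t ^+ k = 0.
Proof.
move=> k_range; have [w w0 wk1] := exists_expr_neq1 k_range.
have : \sum_(t : F) t ^+ k = w ^+ k * \sum_(t : F) t ^+ k.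
  rewrite mulr_sumr (reindex_inj (mulfI w0)) /=.
  by apply: eq_bigr => t _; rewrite exprMn.
move/eqP; rewrite -subr_eq0 -[X in X - _]mul1r -mulrBl mulf_eq0 subr_eq0.
by rewrite eq_sym (negbTE wk1) => /eqP.
Qed.

Lemma sum_expr_exprV i j : (i < #|F|.-1)%N -> (j < #|F|.-1)%N ->
  \sum_(t : F) t ^+ i * t^-1 ^+ j = - ((i == j) && (0 < i)%N)%:R.
Proof.
wlog le_ji : i j / (j <= i)%N.
  move=> wlog_ij lt_i lt_j; have [le_ji|/ltnW le_ij] := leqP j i; first exact: wlog_ij.
  rewrite (reindex_inj invr_inj) /=.
  under eq_bigr do rewrite invrK mulrC.
  by rewrite wlog_ij // eq_sym; case: eqP => [->|].
move=> lt_iq _; rewrite leq_eqVlt in le_ji; case/orP: le_ji => [/eqP ->|lt_ji]; last first.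
  rewrite (eq_bigr (fun t => t ^+ (i - j))) => [|t _]; last by rewrite exprVn expfB.
  rewrite sum_expr; first by rewrite (gtn_eqF lt_ji) oppr0.
  by rewrite subn_gt0 lt_ji (leq_ltn_trans (leq_subr _ _) lt_iq).
case: i lt_iq => [|i] lt_iq /=.
  by rewrite (eq_bigr (fun=> 1)) => [|t _]; rewrite ?mulr1 // sumr_const natr_card oppr0.
rewrite eqxx /= (bigD1 0) //= invr0 expr0n mul0r add0r.
rewrite (eq_bigr (fun=> 1)) => [|t t0]; last by rewrite -exprMn mulfV ?expr1n.
apply/eqP; rewrite sumr_const cardC1 -addr_eq0 -mulrSr prednK ?natr_card //.
exact: ltnW (finNzRing_gt1 F).
Qed.

Lemma sum_weight_at0 (c : F) (Y : F -> F) :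
  \sum_(t : F) (if t == 0 then c else 1) * Y t = \sum_(t : F) Y t + (c - 1) * Y 0.
Proof.
rewrite (bigD1 0) //= [in RHS](bigD1 0) //= eqxx.
rewrite (eq_bigr Y) => [|t /negbTE ->]; last exact: mul1r.
by rewrite mulrBl mul1r; ring.
Qed.

Lemma card_roots_le (p : {poly F}) n :
  p != 0 -> (size p <= n.+1)%N -> (#|[set t | root p t]| <= n)%N.
Proof.
move=> p0 size_p; rewrite -ltnS (leq_trans _ size_p) // cardE.
by rewrite max_poly_roots ?enum_uniq //; apply/allP => t; rewrite mem_enum inE.
Qed.

End FiniteFields.

Section Hyperoval.
Variable F : finFieldType.

Lemma ord3P (r : 'I_3) : [\/ r = 0, r = 1 | r = 2].
Proof.
case: r => -[|[|[|//]]] lt_r; [constructor 1|constructor 2|constructor 3].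
all: exact: val_inj.
Qed.

Lemma sum_ord3 (f : 'I_3 -> F) : \sum_r f r = f 0 + f 1 + f 2.
Proof.
rewrite !big_ord_recr big_ord0 /= add0r.
by congr (f _ + f _ + f _); apply: val_inj.
Qed.

Lemma row3_eq0 (a : 'rV[F]_3) : a 0 0 = 0 -> a 0 1 = 0 -> a 0 2 = 0 -> a = 0.
Proof. by move=> a0 a1 a2; apply/rowP => r; rewrite mxE; case: (ord3P r) => ->. Qed.

(* inl t is the point (1, t, t^2) of the conic; inr true is its nucleus
   (0, 1, 0) in characteristic 2 and inr false the point (0, 0, 1). *)
Definition hyperoval_coord (x : F + bool) (r : 'I_3) : F :=
  match x with
  | inl t => t ^+ r
  | inr b => (r == (if b then 1 else 2) :> nat)%:R
  end.

Definition affine_poly (a : 'rV[F]_3) : {poly F} := Poly [:: a 0 0; a 0 1; a 0 2].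

Lemma sum_hyperoval_coord (a : 'rV[F]_3) x :
  \sum_r a 0 r * hyperoval_coord x r =
  match x with inl t => (affine_poly a).[t] | inr b => a 0 (if b then 1 else 2) end.
Proof.
rewrite sum_ord3; case: x => [t|[]]; rewrite /= ?modn_small //= ?horner_Poly /=.
all: ring.
Qed.

Definition hyperoval_on_line (a : 'rV[F]_3) : {set F + bool} :=
  [set x | \sum_r a 0 r * hyperoval_coord x r == 0].

Lemma card_hyperoval_on_line (a : 'rV[F]_3) :
  2 \in [pchar F] -> a != 0 -> (#|hyperoval_on_line a| <= 2)%N.
Proof.
move=> char2 a0; set p := affine_poly a; apply: leq_trans (card_sum_set _) _.
have -> : [set t | inl t \in hyperoval_on_line a] = [set t | root p t].
  by apply/setP => t; rewrite !inE sum_hyperoval_coord.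
have -> : [set b | inr b \in hyperoval_on_line a] =
          [set b | a 0 (if b then 1 else 2) == 0].
  by apply/setP => b; rewrite !inE sum_hyperoval_coord.
rewrite card_bool_set /=.
have p_coef i : p`_i = [:: a 0 0; a 0 1; a 0 2]`_i by rewrite coef_Poly.
have p_horner t : p.[t] = a 0 0 + a 0 1 * t + a 0 2 * t ^+ 2.
  by rewrite horner_Poly /=; ring.
have [a2|a2] := eqVneq (a 0 2) 0; have [a1|a1] := eqVneq (a 0 1) 0 => /=.
- suff -> : [set t | root p t] = set0 by rewrite cards0.
  have a00 : a 0 0 != 0 by apply: contraNneq a0 => a00; apply/eqP/row3_eq0.
  by apply/setP => t; rewrite !inE rootE p_horner a1 a2 !mul0r !addr0 (negbTE a00).
- rewrite add0n addn1 ltnS; apply: card_roots_le.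
    by apply: contraNneq a1 => p0; have := p_coef 1; rewrite p0 coef0 => /= <-.
  by apply/leq_sizeP => -[|[|[|j]]] // _; rewrite p_coef /= ?a2 ?nth_nil.
- rewrite addn0 addn1 ltnS.
  apply/card_le1_eqP => s t; rewrite !inE !rootE !p_horner a1 !mul0r !addr0.
  move=> /eqP ps /eqP pt; apply/eqP.
  rewrite -subr_eq0 -sqrf_eq0 -(mulrI_eq0 _ (lregP a2)).
  have -> : a 0 2 * (t - s) ^+ 2 = (a 0 0 + a 0 2 * s ^+ 2) + (a 0 0 + a 0 2 * t ^+ 2)
                                   - 2%:R * (a 0 0 + a 0 2 * s * t) by ring.
  by rewrite ps pt (pcharf0 char2) mul0r subr0 addr0.
- rewrite !addn0; apply: card_roots_le; last exact: size_Poly.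
  by apply: contraNneq a2 => p0; have := p_coef 2; rewrite p0 coef0 => /= <-.
Qed.

Definition hyperoval_mx : 'M[F]_(3, #|{: F + bool}|) :=
  \matrix_(r, i) hyperoval_coord (enum_val i) r.

Lemma mul_hyperoval_mx (a : 'rV[F]_3) i :
  (a *m hyperoval_mx) 0 i = \sum_r a 0 r * hyperoval_coord (enum_val i) r.
Proof. by rewrite mxE; apply: eq_bigr => r _; rewrite mxE. Qed.

Lemma arc_hyperoval : 2 \in [pchar F] -> arc_mx hyperoval_mx.
Proof.
move=> char2 f f_inj; rewrite -row_free_unit; apply: inj_row_free => a aG0.
have : (3 <= #|hyperoval_on_line a|)%N.
  have := card_imset [set: 'I_3] (inj_comp enum_val_inj f_inj).
  rewrite cardsT card_ord => <-; apply/subset_leq_card/subsetP => _ /imsetP[i _ ->].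
  move/rowP: aG0 => /(_ i); rewrite mulmx_colsub mxE [RHS]mxE mul_hyperoval_mx.
  by rewrite inE => ->.
by apply: contraTeq => a0; rewrite -ltnNge ltnS card_hyperoval_on_line.
Qed.

Definition hyperoval_inv (x : F + bool) : F + bool :=
  if x is inl t then inl t^-1 else x.

Lemma hyperoval_inv_inj : injective hyperoval_inv.
Proof. by case=> [s|b] [t|b'] //= [/invr_inj ->]. Qed.

Definition hyperoval_weight (g : 'rV[F]_3) (x : F + bool) : F :=
  match x with
  | inl t => if t == 0 then g 0 0 else 1
  | inr b => g 0 (if b then 1 else 2)
  end.

(* Composing with t |-> t^-1 (and 0^-1 = 0) turns the entries of
   hyperoval_mx *m (hyperoval_check_mx g)^T into sums of t^r * t^-r'. *)
Definition hyperoval_check_mx (g : 'rV[F]_3) : 'M[F]_(3, #|{: F + bool}|) :=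
  \matrix_(r, i) (hyperoval_weight g (enum_val i) *
                  hyperoval_mx r (enum_rank (hyperoval_inv (enum_val i)))).

Lemma arc_hyperoval_check (g : 'rV[F]_3) :
  2 \in [pchar F] -> (forall j, g 0 j != 0) -> arc_mx (hyperoval_check_mx g).
Proof.
move=> char2 g0; apply: arc_mx_scale_perm (arc_hyperoval char2) _ _.
  by move=> i; case: (enum_val i) => [t|b] //=; case: ifP; rewrite ?oner_neq0.
exact: inj_comp enum_rank_inj (inj_comp hyperoval_inv_inj enum_val_inj).
Qed.

Lemma hyperoval_mul_check (g : 'rV[F]_3) : (3 < #|F|)%N ->
  hyperoval_mx *m (hyperoval_check_mx g)^T = diag_mx (\row_j (g 0 j - 1)).
Proof.
move=> card_F; have le_3q : (3 <= #|F|.-1)%N by case: #|F| card_F.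
apply/matrixP => r r'; rewrite !mxE.
under eq_bigr do rewrite !mxE enum_rankK mulrCA.
pose E x := hyperoval_weight g x *
            (hyperoval_coord x r * hyperoval_coord (hyperoval_inv x) r').
rewrite -(big_enum_val E) {}/E big_sumType big_bool /= (eq_bigl xpredT) // sum_weight_at0.
rewrite sum_expr_exprV ?(leq_trans (ltn_ord _) le_3q) //.
by case: (ord3P r) => ->; case: (ord3P r') => ->; rewrite /= ?invr0 ?expr0n /=; ring.
Qed.

End Hyperoval.

Theorem theorem7 (m l : nat) (F : finFieldType) :
  #|F| = (2 ^ m)%N -> (4 < 2 ^ m)%N -> (l <= 3)%N ->
  exists C1 C2 : {vspace 'rV[F]_(2 ^ m + 2)},
    [/\ is_nkd_code C1 3 (2 ^ m), is_MDS C1,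
        is_nkd_code C2 (2 ^ m - 1) 4, is_MDS C2
      & l_intersection_pair C1 C2 l].
Proof.
move=> card_F q_gt4 le_l3.
have char2 : 2 \in [pchar F] := card_finPcharP card_F isT.
have [w w0 w1] : exists2 w : F, w != 0 & w ^+ 1 != 1.
  by apply: exists_expr_neq1; rewrite card_F; lia.
pose g : 'rV[F]_3 := \row_j (if (j < l)%N then 1 else w).
have g0 j : g 0 j != 0 by rewrite mxE; case: ifP; rewrite ?oner_neq0.
have N_eq : #|{: F + bool}| = (2 ^ m + 2)%N by rewrite card_sum card_bool card_F.
have lt_3N : (3 < #|{: F + bool}|)%N by rewrite N_eq; lia.
have [C1_code C1_mds] := gen_code_mds (arc_hyperoval char2) (ltnW lt_3N) isT.
have [C2_code C2_mds] := check_code_mds (arc_hyperoval_check char2 g0) lt_3N.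
rewrite -N_eq (_ : (2 ^ m - 1 = #|{: F + bool}| - 3)%N); last by lia.
rewrite (_ : 2 ^ m = #|{: F + bool}| - 3 + 1)%N; last by lia.
exists (gen_code (hyperoval_mx F)), (check_code (hyperoval_check_mx g)); split => //.
rewrite /l_intersection_pair /gen_code /check_code dim_limg_cap_lker; last first.
  exact: lker_arc_mx (arc_hyperoval char2) (ltnW lt_3N).
rewrite hyperoval_mul_check; last by rewrite card_F; lia.
rewrite dim_lker_diag -[RHS](card_ord_lt le_l3); apply: eq_card => j.
by rewrite !inE !mxE; case: ifP => _; rewrite ?subrr ?eqxx // subr_eq0 (negbTE w1).
Qed.
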